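(* Let $E$ be a finite-dimensional real affine space and let $G(E)$ be the set of generalized affine functions on $E$, equipped with the topology of pointwise convergence. Then $G(E)$ is sequentially compact: every sequence in $G(E)$ has a subsequence converging pointwise to an element of $G(E)$.
   Context: A generalized affine function on $E$ is a function $E\to\overline{\mathbb{R}}=\mathbb{R}\cup\{\pm\infty\}$ that is both convex and concave (extended-real-valued sense). The topology of pointwise convergence is the subspace topology from the product topology on $\overline{\mathbb{R}}^{E}$. *)

From HB Require Import structures.
From mathcomp Require Import all_boot all_order all_algebra.
From mathcomp Require Import all_classical all_reals all_analysis.
Set Implicit Arguments. Unset Strict Implicit. Unset Printing Implicit Defensive.
Import Order.TTheory GRing.Theory Num.Theory.
Local Open Scope ring_scope.
Local Open Scope ereal_scope.

(* The model of a finite-dimensional real affine space: 'rV[R]_n, R a realType. *)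

(* Convexity of an extended-real-valued function: its epigraph
   {(x, t) : f x <= t} (t real) is convex. *)
Definition ext_convex (R : realType) (n : nat) (f : 'rV[R]_n -> \bar R) : Prop :=
  forall (x y : 'rV[R]_n) (t s l : R), (0 <= l <= 1)%R ->
    f x <= t%:E -> f y <= s%:E ->
    f ((1 - l) *: x + l *: y)%R <= ((1 - l) * t + l * s)%:E.

(* Concavity: the hypograph {(x, t) : t <= f x} (t real) is convex. *)
Definition ext_concave (R : realType) (n : nat) (f : 'rV[R]_n -> \bar R) : Prop :=
  forall (x y : 'rV[R]_n) (t s l : R), (0 <= l <= 1)%R ->
    t%:E <= f x -> s%:E <= f y ->
    ((1 - l) * t + l * s)%:E <= f ((1 - l) *: x + l *: y)%R.

Definition generalized_affine (R : realType) (n : nat) (f : 'rV[R]_n -> \bar R) : Prop :=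
  ext_convex f /\ ext_concave f.

From HB Require Import structures.
From mathcomp Require Import all_boot all_order all_algebra.
From mathcomp Require Import all_classical all_reals all_analysis.
From mathcomp Require Import ring lra.
Import Order.TTheory GRing.Theory Num.Theory numFieldNormedType.Exports.
Local Open Scope ring_scope.
Local Open Scope classical_set_scope.
Set Implicit Arguments. Unset Strict Implicit. Unset Printing Implicit Defensive.

(* The strict epigraph {(t, y) | f y < t} of a generalized affine function f is a
   hemispace of R^(1+n): a convex set with convex complement. Every hemispace of R^m
   lies between an open half-space and its closure (induction on m along vertical
   fibers). Normalizing these half-spaces along a sequence of hemispaces and extracting
   a convergent subsequence, membership of any point off the limit hyperplane
   stabilizes; on the hyperplane, of smaller dimension, we recurse. For the strict
   epigraphs of u_k this gives one subsequence along which [u_k x < t] is eventually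
   constant for all x and t, so u_k x converges in the extended reals; convexity and
   concavity pass to pointwise limits. *)

Section Hemispaces.
Variable R : realType.

Definition convex m (A : set 'rV[R]_m) := forall x y l, 0 <= l <= 1 ->
  A x -> A y -> A ((1 - l) *: x + l *: y).

Definition hemispace m (A : set 'rV[R]_m) := convex A /\ convex (~` A).

Definition linform m (a : 'cV[R]_m) (x : 'rV[R]_m) : R := (x *m a) 0 0.

Definition sandwich m (H : set 'rV[R]_m) a b :=
  (forall x, linform a x < b -> H x) /\ (forall x, H x -> linform a x <= b).

(* [a] may vanish, and then [H] is empty ([b < 0]) or the whole space ([b > 0]). *)
Definition sandwiched m (H : set 'rV[R]_m) :=
  exists a b, (a != 0 \/ b != 0) /\ sandwich H a b.

Lemma linformZ m (a : 'cV[R]_m) c x : linform a (c *: x) = c * linform a x.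
Proof. by rewrite /linform -scalemxAl mxE. Qed.

Lemma linformZl m (a : 'cV[R]_m) c x : linform (c *: a) x = c * linform a x.
Proof. by rewrite /linform -scalemxAr mxE. Qed.

Lemma linformD m (a : 'cV[R]_m) x y : linform a (x + y) = linform a x + linform a y.
Proof. by rewrite /linform mulmxDl mxE. Qed.

Lemma linformN m (a : 'cV[R]_m) x : linform a (- x) = - linform a x.
Proof. by rewrite /linform mulNmx mxE. Qed.

Lemma linformB m (a : 'cV[R]_m) x y : linform a (x - y) = linform a x - linform a y.
Proof. by rewrite linformD linformN. Qed.

Lemma linformNl m (a : 'cV[R]_m) x : linform (- a) x = - linform a x.
Proof. by rewrite /linform mulmxN mxE. Qed.

Lemma hemispaceC m (H : set 'rV[R]_m) : hemispace H -> hemispace (~` H).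
Proof. by move=> [cH cC]; split; rewrite ?setCK. Qed.

Lemma sandwichN m (H : set 'rV[R]_m) a b : sandwich (~` H) a b -> sandwich H (- a) (- b).
Proof.
move=> [lo hi]; split => x; rewrite linformNl.
  by rewrite ltrN2 => ltx; apply: contrapT => /hi; rewrite leNgt ltx.
by move=> Hx; rewrite lerN2 leNgt; apply/negP => /lo.
Qed.

Lemma sandwichedC m (H : set 'rV[R]_m) : sandwiched (~` H) -> sandwiched H.
Proof.
move=> [a [b [nz s]]]; exists (- a), (- b); split; last exact: sandwichN.
by rewrite !oppr_eq0.
Qed.

Lemma sandwichZ m (H : set 'rV[R]_m) a b c :
  0 < c -> sandwich H a b -> sandwich H (c *: a) (c * b).
Proof.
move=> c0 [lo hi]; split => x; rewrite linformZl.
  by rewrite ltr_pM2l //; exact: lo.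
by move=> /hi; rewrite ler_pM2l.
Qed.

Definition pt m t (y : 'rV[R]_m) : 'rV[R]_(1 + m) := row_mx t%:M y.

Lemma pt_comb m t1 t2 (y1 y2 : 'rV[R]_m) l :
  (1 - l) *: pt t1 y1 + l *: pt t2 y2 =
  pt ((1 - l) * t1 + l * t2) ((1 - l) *: y1 + l *: y2).
Proof. by rewrite /pt !scale_row_mx add_row_mx !scale_scalar_mx -raddfD. Qed.

Lemma pt_surj m (x : 'rV[R]_(1 + m)) : exists t y, x = pt t y.
Proof. by exists (lsubmx x 0 0), (rsubmx x); rewrite /pt -mx11_scalar hsubmxK. Qed.

Lemma linform_pt m al (a : 'cV[R]_m) t y :
  linform (col_mx al%:M a) (pt t y) = t * al + linform a y.
Proof. by rewrite /linform /pt mul_row_col mxE -scalar_mxM mxE mulr1n. Qed.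

Lemma comb_same m (y : 'rV[R]_m) l : (1 - l) *: y + l *: y = y.
Proof. by rewrite -scalerDl subrK scale1r. Qed.

Definition fiber m (H : set 'rV[R]_(1 + m)) y : set R := fun t => H (pt t y).

Lemma convex_fiber m (H : set 'rV[R]_(1 + m)) y : convex H -> is_interval (fiber H y).
Proof.
move=> cH t1 t2 h1 h2 t /andP[t1t tt2].
have [e12|t12] := eqVneq t1 t2.
  by have -> : t = t2 by apply/eqP; rewrite eq_le tt2 -e12 t1t.
have lt12 : t1 < t2 by rewrite lt_neqAle t12 (le_trans t1t tt2).
have l01 : 0 <= (t - t1) / (t2 - t1) <= 1.
  apply/andP; split; first by apply: divr_ge0; lra.
  by rewrite ler_pdivrMr ?subr_gt0 //; lra.
have := cH _ _ _ l01 h1 h2; rewrite pt_comb comb_same.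
suff -> : (1 - (t - t1) / (t2 - t1)) * t1 + (t - t1) / (t2 - t1) * t2 = t by [].
by field; rewrite subr_eq0 eq_sym.
Qed.

Definition down_closed (A : set R) := forall s t, s <= t -> A t -> A s.

Lemma interval_down_closed (A : set R) : is_interval A -> is_interval (~` A) ->
  down_closed A \/ down_closed (~` A).
Proof.
move=> iA iC; have [|notdown] := pselect (down_closed A); first by left.
right => s' t' le_st' nAt' As'; apply: notdown => s t le_st At.
apply: contrapT => nAs.
have [le_tt'|lt_t't] := leP t t'.
  have [le_s's|lt_ss'] := leP s' s.
    by apply: nAs; apply: (iA s' t) => //; rewrite le_s's le_st.
  by apply: (iC s t' nAs nAt' s') => //; rewrite le_st' ltW.
by apply: nAt'; apply: (iA s' t) => //; rewrite le_st' ltW.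
Qed.

Lemma down_closed_unbounded (A : set R) t t' M : down_closed A -> A t -> ~ A t' ->
  `|t| + `|t'| <= M -> A (- M) /\ ~ A M.
Proof.
move=> dA At nAt' hM; have n1 : - t <= `|t| by rewrite -normrN ler_norm.
have := ler_norm t'; have := normr_ge0 t; have := normr_ge0 t' => n2 n3 n4.
by split=> [|AM]; [apply: dA At | apply: nAt'; apply: dA AM]; lra.
Qed.

Lemma fibers_down_closed m (H : set 'rV[R]_(1 + m)) : hemispace H ->
  (forall y, fiber H y !=set0) -> (forall y, ~` fiber H y !=set0) ->
  (forall y, down_closed (fiber H y)) \/ (forall y, down_closed (~` fiber H y)).
Proof.
move=> [cH cC] meet comeet.
have du y : down_closed (fiber H y) \/ down_closed (~` fiber H y).
  by apply: interval_down_closed; [exact: convex_fiber | exact: (@convex_fiber _ _ y cC)].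
have [|/existsNP[y1 ndown1]] := pselect (forall y, down_closed (fiber H y)).
  by left.
have [//|up1] := du y1.
right => y; case: (du y) => // down; exfalso.
have [[t1 h1] [t1' h1']] := (meet y, comeet y).
have [[t2 h2] [t2' h2']] := (meet y1, comeet y1).
pose M := `|t1| + `|t1'| + `|t2| + `|t2'|.
have M1 : `|t1| + `|t1'| <= M.
  by rewrite /M; have := normr_ge0 t2; have := normr_ge0 t2'; lra.
have M2 : `|t2'| + `|t2| <= M.
  by rewrite /M; have := normr_ge0 t1; have := normr_ge0 t1'; lra.
have [lo1 hi1] := down_closed_unbounded down h1 h1' M1.
have [lo2 hi2] := down_closed_unbounded up1 h2' (fun h => h h2) M2.
(* The midpoints of [(-M, y)], [(M, y1)] and of [(M, y)], [(-M, y1)] coincide, but the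
   first lies in [H] and the second does not. *)
have mid : 0 <= (2^-1 : R) <= 1.
  by apply/andP; split; [rewrite invr_ge0 ler0n | rewrite invf_le1 ?ler1n ?ltr0n].
have := cC _ _ _ mid hi1 lo2; have := cH _ _ _ mid lo1 (contrapT hi2).
rewrite !pt_comb.
have -> : (1 - 2^-1) * M + 2^-1 * - M = 0 by field.
by have -> : (1 - 2^-1) * - M + 2^-1 * M = 0 by field.
Qed.

Definition threshold m (H : set 'rV[R]_(1 + m)) (tau : 'rV[R]_m -> R) :=
  forall y t, (t < tau y -> H (pt t y)) /\ (tau y < t -> ~ H (pt t y)).

Lemma threshold_exists m (H : set 'rV[R]_(1 + m)) :
  (forall y, fiber H y !=set0) -> (forall y, ~` fiber H y !=set0) ->
  (forall y, down_closed (fiber H y)) -> exists tau, threshold H tau.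
Proof.
move=> meet comeet down.
have hsup y : has_sup (fiber H y).
  split; first exact: meet.
  have [t0 nt0] := comeet y; exists t0 => t Ht; rewrite leNgt; apply/negP => lt0.
  by apply: nt0; apply: down Ht; exact: ltW.
exists (fun y => sup (fiber H y)) => y t; split => [lt_t|lt_t Ht].
  have e0 : 0 < sup (fiber H y) - t by rewrite subr_gt0.
  have [s Hs lt_s] := sup_adherent e0 (hsup y).
  by apply: down Hs; lra.
by have := sup_upper_bound (hsup y) Ht; lra.
Qed.

Lemma threshold_affine m (H : set 'rV[R]_(1 + m)) tau : hemispace H -> threshold H tau ->
  forall y1 y2 l, 0 <= l <= 1 ->
  tau ((1 - l) *: y1 + l *: y2) = (1 - l) * tau y1 + l * tau y2.
Proof.
move=> [cH cC] th y1 y2 l l01; have /andP[l0 l1] := l01.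
apply/eqP; rewrite eq_le; apply/andP; split; apply/ler_addgt0Pr => e e0.
  rewrite leNgt; apply/negP => /(th _ _).1 Hz.
  have o1 : ~ H (pt (tau y1 + e) y1) by apply: (th _ _).2; lra.
  have o2 : ~ H (pt (tau y2 + e) y2) by apply: (th _ _).2; lra.
  have := cC _ _ _ l01 o1 o2; rewrite pt_comb.
  have -> : (1 - l) * (tau y1 + e) + l * (tau y2 + e) = (1 - l) * tau y1 + l * tau y2 + e.
    by ring.
  by move/(_ Hz).
have i1 : H (pt (tau y1 - e) y1) by apply: (th _ _).1; lra.
have i2 : H (pt (tau y2 - e) y2) by apply: (th _ _).1; lra.
have := cH _ _ _ l01 i1 i2; rewrite pt_comb.
have -> : (1 - l) * (tau y1 - e) + l * (tau y2 - e) = (1 - l) * tau y1 + l * tau y2 - e.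
  by ring.
by rewrite -lerBlDr leNgt => Hz; apply/negP => /(th _ _).2.
Qed.

Lemma affine_linform m (f : 'rV[R]_m -> R) :
  (forall x y l, 0 <= l <= 1 -> f ((1 - l) *: x + l *: y) = (1 - l) * f x + l * f y) ->
  exists c e, forall y, f y = linform c y + e.
Proof.
move=> hf; pose g y := f y - f 0.
have half : 0 <= (2^-1 : R) <= 1.
  by apply/andP; split; [rewrite invr_ge0 ler0n | rewrite invf_le1 ?ler1n ?ltr0n].
have half_half : 1 - 2^-1 = 2^-1 :> R by field.
have gZ01 l y : 0 <= l <= 1 -> g (l *: y) = l * g y.
  by move=> l01; rewrite /g; have := hf 0 y l l01; rewrite scaler0 add0r => ->; ring.
have gN y : g (- y) = - g y.
  by have := hf y (- y) _ half; rewrite half_half scalerN subrr /g => ->; field.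
have gZ_ge0 l y : 0 <= l -> g (l *: y) = l * g y.
  move=> l0; have [l1|l_gt1] := leP l 1; first by apply: gZ01; rewrite l0 l1.
  have l_gt0 : 0 < l by apply: lt_trans l_gt1.
  have := gZ01 l^-1 (l *: y); rewrite scalerA mulVf ?gt_eqF // scale1r => ->.
    by field; rewrite gt_eqF.
  by rewrite invr_ge0 ltW //= invf_le1 // ltW.
have gZ l y : g (l *: y) = l * g y.
  have [|l_lt0] := leP 0 l; first exact: gZ_ge0.
  by rewrite -[l]opprK scaleNr gN gZ_ge0 ?oppr_ge0 ?ltW //; ring.
have gD x y : g (x + y) = g x + g y.
  have -> : x + y = 2 *: ((1 - 2^-1) *: x + 2^-1 *: y).
    by rewrite half_half -scalerDr scalerA mulfV ?pnatr_eq0 // scale1r.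
  by rewrite gZ /g hf // half_half; field.
exists (\col_i g 'e_i), (f 0) => y.
have -> : f y = g y + f 0 by rewrite /g subrK.
congr (_ + _); rewrite {1}(row_sum_delta y) (big_morph g gD (subrr _)) /linform mxE.
by apply: eq_bigr => i _; rewrite gZ mxE.
Qed.

Lemma sandwiched_of_threshold m (H : set 'rV[R]_(1 + m)) c e :
  threshold H (fun y => linform c y + e) -> sandwiched H.
Proof.
move=> th; exists (col_mx 1%:M (- c)), e.
have E t y : linform (col_mx 1%:M (- c)) (pt t y) = t - linform c y.
  by rewrite linform_pt mulr1 linformNl.
split.
  left; rewrite col_mx_eq0 negb_and; apply/orP; left.
  by apply/negP => /eqP/matrixP/(_ 0 0); rewrite !mxE /= => /eqP; rewrite oner_eq0.
split=> x; have [t [y ->]] := pt_surj x; rewrite E => h.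
  by apply: (th y t).1; lra.
by rewrite leNgt; apply/negP => lt_t; apply: (th y t).2 h; lra.
Qed.

Lemma sandwiched_of_down_closed_fibers m (H : set 'rV[R]_(1 + m)) : hemispace H ->
  (forall y, fiber H y !=set0) -> (forall y, ~` fiber H y !=set0) ->
  (forall y, down_closed (fiber H y)) -> sandwiched H.
Proof.
move=> hH meet comeet down; have [tau th] := threshold_exists meet comeet down.
have [c [e tauE]] := affine_linform (threshold_affine hH th).
by apply: (@sandwiched_of_threshold _ _ c e); rewrite -(funext tauE).
Qed.

Lemma full_fiber_hull m (H : set 'rV[R]_(1 + m)) y0 y1 t1 l t : convex H ->
  (forall s, H (pt s y0)) -> H (pt t1 y1) -> 0 < l <= 1 ->
  H (pt t ((1 - l) *: y1 + l *: y0)).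
Proof.
move=> cH full H1 /andP[l0 l1].
have := cH _ _ l (ltac:(by rewrite ltW)) H1 (full ((t - (1 - l) * t1) / l)).
by rewrite pt_comb; congr (H (pt _ _)); field; rewrite gt_eqF.
Qed.

Lemma full_fibers_hemispace m (H : set 'rV[R]_(1 + m)) :
  hemispace H -> hemispace [set y | forall t, H (pt t y)].
Proof.
move=> [cH cC]; split=> y1 y2 l l01 h1 h2.
  by move=> t; have := cH _ _ _ l01 (h1 t) (h2 t); rewrite pt_comb -mulrDl subrK mul1r.
have /existsNP[t1 n1] := h1; have /existsNP[t2 n2] := h2.
by move=> full; apply: (cC _ _ _ l01 n1 n2); rewrite pt_comb; exact: full.
Qed.

Lemma exists_comb_gt (p0 b p1 : R) : p0 <= b -> b < p1 ->
  exists2 l, 0 < l <= 1 & b < (1 - l) * p1 + l * p0.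
Proof.
move=> p0b bp1; exists ((p1 - b) / (2 * (p1 - p0))).
  apply/andP; split; first by apply: divr_gt0; lra.
  by rewrite ler_pdivrMr; lra.
have -> : (1 - (p1 - b) / (2 * (p1 - p0))) * p1 + (p1 - b) / (2 * (p1 - p0)) * p0
          = (p1 + b) / 2 by field; lra.
lra.
Qed.

Lemma convex_comb_lt (t' t s' s l : R) : 0 <= l <= 1 -> t' < t -> s' < s ->
  (1 - l) * t' + l * s' < (1 - l) * t + l * s.
Proof.
move=> /andP[l0 l1] tt ss; have [->|l_neq1] := eqVneq l 1.
  by rewrite subrr !mul0r !add0r !mul1r.
apply: ltr_leD; last by rewrite ler_wpM2l // ltW.
by rewrite ltr_pM2l // subr_gt0 lt_neqAle l_neq1.
Qed.

Lemma sandwiched_of_full_fiber m (H : set 'rV[R]_(1 + m)) : hemispace H ->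
  (forall U : set 'rV[R]_m, hemispace U -> sandwiched U) ->
  (exists y0, forall t, H (pt t y0)) -> sandwiched H.
Proof.
move=> hH IH [y0 full0].
have [a [b [nz [lo hi]]]] := IH _ (full_fibers_hemispace hH).
have E t y : linform (col_mx 0%:M a) (pt t y) = linform a y.
  by rewrite linform_pt mulr0 add0r.
exists (col_mx 0%:M a), b; split.
  by case: nz => [a0|]; [left; rewrite col_mx_eq0 negb_and a0 orbT | right].
split=> x; have [t1 [y1 ->]] := pt_surj x; rewrite E; first by move=> /lo.
(* A point of [H] strictly beyond the hyperplane of [U] would put full fibers over
   points of the segment towards [y0] that are still beyond it. *)
move=> H1; rewrite leNgt; apply/negP => lt_b1.
have [l l01 lt_bl] := exists_comb_gt (hi _ full0) lt_b1.
have := hi _ (fun t => full_fiber_hull t hH.1 full0 H1 l01).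
by rewrite linformD !linformZ; lra.
Qed.

Theorem hemispace_sandwiched m (H : set 'rV[R]_m) : hemispace H -> sandwiched H.
Proof.
elim: m H => [|m IH] H hH.
  exists 0, (if `[< H 0 >] then 1 else -1); split.
    by right; case: ifP; rewrite ?oppr_eq0 oner_eq0.
  split=> x; rewrite (thinmx0 x) /linform mul0mx mxE; case: ifPn.
  - by move=> /asboolP.
  - by rewrite ltr0N1.
  - by rewrite ler01.
  - by move=> /asboolP.
have [full|nofull] := pselect (exists y0, forall t, H (pt t y0)).
  exact: sandwiched_of_full_fiber.
have [empty|noempty] := pselect (exists y0, forall t, ~ H (pt t y0)).
  exact/sandwichedC/(sandwiched_of_full_fiber (hemispaceC hH)).
have meet y : fiber H y !=set0.
  by apply: contrapT => ney; apply: noempty; exists y => t Ht; apply: ney; exists t.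
have comeet y : ~` fiber H y !=set0.
  by apply/existsNP => hy; apply: nofull; exists y.
have [down|up] := fibers_down_closed hH meet comeet.
  exact: sandwiched_of_down_closed_fibers.
apply/sandwichedC/(sandwiched_of_down_closed_fibers (hemispaceC hH) comeet _ up).
by move=> y; have [t Ht] := meet y; exists t => /(_ Ht).
Qed.

End Hemispaces.

Section Selection.
Variable R : realType.

Definition eventually_constant (P : nat -> Prop) :=
  (\forall k \near \oo, P k) \/ (\forall k \near \oo, ~ P k).

Lemma increasing_seq_cvgy (phi : nat -> nat) : increasing_seq phi -> phi @ \oo --> \oo.
Proof.
move=> /increasing_seqP incr; have ge k : (k <= phi k)%N.
  by elim: k => // k ih; apply: leq_ltn_trans ih (incr k).
by apply/cvgnyPge => A; exists A => // k /= Ak; apply: leq_trans Ak (ge k).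
Qed.

Lemma increasing_seq_comp (phi psi : nat -> nat) :
  increasing_seq phi -> increasing_seq psi -> increasing_seq (phi \o psi).
Proof. by move=> hphi hpsi i j /=; rewrite hphi; exact: hpsi. Qed.

Lemma eventually_constant_comp P phi :
  increasing_seq phi -> eventually_constant P -> eventually_constant (P \o phi).
Proof. by move=> /increasing_seq_cvgy hphi [h|h]; [left|right]; exact: hphi _ h. Qed.

Lemma bolzano_weierstrass_family (I : eqType) (s : I -> nat -> R) (r : seq I) :
  (forall i, exists M, forall k, `|s i k| <= M) ->
  exists phi, increasing_seq phi /\ {in r, forall i, cvgn (s i \o phi)}.
Proof.
move=> bs; elim: r => [|i r [phi [hphi cv]]]; first by exists id.
have [psi hpsi cvi] : exists2 psi, increasing_seq psi & cvgn ((s i \o phi) \o psi).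
  apply: bolzano_weierstrass; have [M hM] := bs i.
  exists M; split; first exact: num_real.
  by move=> M' hM' k _; apply: le_trans (hM _) (ltW hM').
exists (phi \o psi); split; first exact: increasing_seq_comp.
move=> j; rewrite inE => /predU1P[-> //|jr].
have /cvg_ex[l hl] := cv j jr; apply/cvg_ex; exists l.
exact: cvg_comp (increasing_seq_cvgy hpsi) hl.
Qed.

Lemma entry_neq0 m (a : 'cV[R]_m) : a != 0 -> exists i, a i 0 != 0.
Proof.
move=> a0; apply/not_existsP => az; move/eqP: a0; apply; apply/matrixP => i j.
by rewrite (ord1 j) mxE; apply/eqP/negPn/negP; exact: az.
Qed.

Lemma sandwiched_normalized m (H : set 'rV[R]_m) :
  sandwiched H ->
  exists (a : 'cV[R]_m) b, \sum_i `|a i 0| + `|b| = 1 /\ sandwich H a b.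
Proof.
move=> [a [b [nz s]]]; pose N := \sum_i `|a i 0| + `|b|.
have sum_ge0 : 0 <= \sum_i `|a i 0| by apply: sumr_ge0.
have N_gt0 : 0 < N.
  case: nz => [/entry_neq0[i ai0]|b0]; last first.
    by rewrite /N ltr_pwDr // normr_gt0.
  have ai_gt0 : 0 < `|a i 0| by rewrite normr_gt0.
  apply: (lt_le_trans ai_gt0).
  by rewrite /N (bigD1 i) //= -addrA lerDl addr_ge0 // sumr_ge0.
exists (N^-1 *: a), (N^-1 * b); split; last by apply: sandwichZ s; rewrite invr_gt0.
have normN x : `|N^-1 * x| = N^-1 * `|x| by rewrite normrM gtr0_norm ?invr_gt0.
under eq_bigr do rewrite mxE normN.
by rewrite -mulr_sumr normN -mulrDr mulVf ?gt_eqF.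
Qed.

Lemma normalized_subseq_cvg m (A : nat -> 'cV[R]_m) (B : nat -> R) :
  (forall k, \sum_i `|A k i 0| + `|B k| = 1) ->
  exists phi (a : 'cV[R]_m) b, [/\ increasing_seq phi, \sum_i `|a i 0| + `|b| = 1 &
    forall x, (fun k => linform (A (phi k)) x - B (phi k)) @ \oo --> linform a x - b].
Proof.
move=> norm1; pose s (i : option 'I_m) k := if i is Some j then A k j 0 else B k.
have sum_ge0 k : 0 <= \sum_i `|A k i 0| by apply: sumr_ge0.
have s_le1 i : exists M, forall k, `|s i k| <= M.
  exists 1 => k; have := norm1 k; have := sum_ge0 k; case: i => [j|] /=; last lra.
  have : `|A k j 0| <= \sum_i `|A k i 0| by rewrite (bigD1 j) //= lerDl sumr_ge0.
  by have := normr_ge0 (B k); lra.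
have [phi [hphi cv]] := bolzano_weierstrass_family (enum {: option 'I_m}) s_le1.
have cvs i : (s i \o phi) @ \oo --> limn (s i \o phi) by apply: cv; rewrite mem_enum.
pose a : 'cV[R]_m := \col_i limn (s (Some i) \o phi); pose b := limn (s None \o phi).
have ca i : (fun k => A (phi k) i 0) @ \oo --> a i 0 by rewrite mxE; exact: cvs (Some i).
have sum_cvg F (f : 'I_m -> R) : (forall i, F i @ \oo --> f i) ->
    (fun k => \sum_i F i k) @ \oo --> \sum_i f i.
  by move=> cvF; apply: (@cvg_big _ _ +%R 0 xpredT add_continuous) => i _.
exists phi, a, b; split => //.
- have : (fun k => \sum_i `|A (phi k) i 0| + `|B (phi k)|) @ \oo -->
         \sum_i `|a i 0| + `|b|.
    by apply: cvgD; [apply: sum_cvg => i; exact: cvg_norm | exact: cvg_norm (cvs None)].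
  under eq_cvg do rewrite norm1.
  by move=> h; apply: cvg_unique h (cvg_cst _).
- move=> x; apply: cvgB (cvs None); rewrite /linform mxE.
  under eq_cvg do rewrite mxE.
  by apply: sum_cvg => i; apply: cvgM; [exact: cvg_cst | exact: ca].
Qed.

Lemma linform_tr_gt0 m (a : 'cV[R]_m) : a != 0 -> 0 < linform a a^T.
Proof.
move=> /entry_neq0[i ai0]; rewrite /linform mxE (bigD1 i) //= !mxE -expr2.
have : 0 < a i 0 ^+ 2 by rewrite lt_def sqrf_eq0 ai0 sqr_ge0.
have : 0 <= \sum_(j < m | j != i) a^T 0 j * a j 0.
  by apply: sumr_ge0 => j _; rewrite !mxE -expr2 sqr_ge0.
lra.
Qed.

Lemma hyperplane_parametrization m (a : 'cV[R]_m) b : a != 0 ->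
  exists r (x0 : 'rV[R]_m) (P : 'M[R]_(r, m)),
    (r < m)%N /\ forall x, linform a x = b -> exists y, x = x0 + y *m P.
Proof.
move=> a0; have aa_gt0 := linform_tr_gt0 a0.
pose x0 := (b / linform a a^T) *: a^T.
exists (\rank (kermx a)), x0, (row_base (kermx a)); split.
  rewrite mxrank_ker ltn_subrL lt0n mxrank_eq0 a0 /=.
  by apply: leq_trans (rank_leq_row a); rewrite lt0n mxrank_eq0.
move=> x ax; have : (x - x0 <= kermx a)%MS.
  have ax0 : linform a (x - x0) = 0.
    by rewrite linformB /x0 linformZ ax mulfVK ?gt_eqF ?subrr.
  apply/sub_kermxP; rewrite [_ *m a]mx11_scalar -[(_ *m a) 0 0]/(linform a _) ax0.
  by apply/matrixP => i j; rewrite !mxE mul0rn.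
by rewrite -(eq_row_base (kermx a)) => /submxP[y xy]; exists y; rewrite -xy addrC subrK.
Qed.

Lemma hemispace_preimage m r (H : set 'rV[R]_m) x0 (P : 'M[R]_(r, m)) :
  hemispace H -> hemispace (fun y => H (x0 + y *m P)).
Proof.
have comb y1 y2 l : (1 - l) *: (x0 + y1 *m P) + l *: (x0 + y2 *m P) =
                    x0 + ((1 - l) *: y1 + l *: y2) *m P.
  by rewrite mulmxDl -!scalemxAl !scalerDr addrACA comb_same.
by move=> [cH cC]; split=> y1 y2 l l01 h1 h2; rewrite /= -comb;
  [exact: cH | exact: cC].
Qed.

Lemma eventually_constant_off_hyperplane m (H : nat -> set 'rV[R]_m) A B x c :
  (forall k, sandwich (H k) (A k) (B k)) ->
  (fun k => linform (A k) x - B k) @ \oo --> c -> c != 0 ->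
  eventually_constant (fun k => H k x).
Proof.
move=> s cv; rewrite neq_lt => /orP[c_lt0|c_gt0].
  left; apply: filterS (cvgr_lt _ cv _ c_lt0) => k lt0.
  by apply: (s k).1; lra.
right; apply: filterS (cvgr_gt _ cv _ c_gt0) => k gt0 /(s k).2; lra.
Qed.

Theorem hemispace_selection m (H : nat -> set 'rV[R]_m) : (forall k, hemispace (H k)) ->
  exists phi, increasing_seq phi /\ forall x, eventually_constant (fun k => H (phi k) x).
Proof.
elim/ltn_ind: m H => m IH H hH.
have /choice[AB hAB] : forall k, exists ab : 'cV[R]_m * R,
    \sum_i `|ab.1 i 0| + `|ab.2| = 1 /\ sandwich (H k) ab.1 ab.2.
  move=> k; have [a [b ?]] := sandwiched_normalized (hemispace_sandwiched (hH k)).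
  by exists (a, b).
have [phi [a [b [hphi norm1 cv]]]] := normalized_subseq_cvg (fun k => (hAB k).1).
have off x : linform a x - b != 0 -> eventually_constant (fun k => H (phi k) x).
  by apply: (eventually_constant_off_hyperplane (fun k => (hAB (phi k)).2)).
have [a0|a_neq0] := eqVneq a 0.
  exists phi; split => // x; apply: off.
  rewrite a0 /linform mulmx0 mxE sub0r oppr_eq0.
  apply/eqP => b0; move: norm1; rewrite a0 b0 normr0 addr0 big1 => [|i _].
    by move/eqP; rewrite eq_sym oner_eq0.
  by rewrite mxE normr0.
have [r [x0 [P [rm param]]]] := hyperplane_parametrization b a_neq0.
have [psi [hpsi ec]] := IH r rm _ (fun k => hemispace_preimage x0 P (hH (phi k))).
exists (phi \o psi); split; first exact: increasing_seq_comp.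
move=> x; have [ax|ax] := eqVneq (linform a x - b) 0; last first.
  exact: (eventually_constant_comp hpsi (off x ax)).
have [y ->] : exists y, x = x0 + y *m P by apply: param; lra.
exact: ec.
Qed.

End Selection.

Section GeneralizedAffine.
Variable R : realType.
Local Open Scope ereal_scope.

Lemma ereal_between (a b : \bar R) : a < b -> exists t : R, a < t%:E < b.
Proof.
case: a => [r| |]; case: b => [s| |] //= ab.
- by exists ((r + s) / 2)%R; rewrite !lte_fin !midf_lt.
- by exists (r + 1)%R; rewrite lte_fin ltry andbT ltrDl.
- by exists (s - 1)%R; rewrite ltNyr lte_fin gtrBl ltr01.
- by exists 0%R; rewrite ltNyr ltry.
Qed.

Definition strict_epigraph n (f : 'rV[R]_n -> \bar R) : set 'rV[R]_(1 + n) :=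
  [set p | f (rsubmx p) < (lsubmx p 0 0)%:E].

Lemma strict_epigraph_pt n (f : 'rV[R]_n -> \bar R) t y :
  strict_epigraph f (pt t y) = (f y < t%:E).
Proof. by rewrite /strict_epigraph /pt /= row_mxKl row_mxKr mxE mulr1n. Qed.

Lemma hemispace_strict_epigraph n (f : 'rV[R]_n -> \bar R) :
  generalized_affine f -> hemispace (strict_epigraph f).
Proof.
move=> [cvf ccf]; split=> p q l l01; have [t [y ->]] := pt_surj p;
  have [s [z ->]] := pt_surj q; rewrite pt_comb /= !strict_epigraph_pt.
  move=> /ereal_between[t' /andP[yt' t't]] /ereal_between[s' /andP[zs' s's]].
  apply: le_lt_trans (cvf _ _ _ _ _ l01 (ltW yt') (ltW zs')) _.
  by rewrite lte_fin convex_comb_lt // -lte_fin.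
move=> /negP ty /negP sz; apply/negP; rewrite -!leNgt in ty sz *; exact: ccf.
Qed.

Lemma eventually_constant_lt_cvg (v : nat -> \bar R) :
  (forall t : R, eventually_constant (fun k => v k < t%:E)) ->
  exists l : \bar R, v @ \oo --> l.
Proof.
move=> ec; pose L := ereal_inf (range (esups v)); pose l := ereal_sup (range (einfs v)).
have l_le_L : l <= L.
  apply: ge_ereal_sup => _ [n _ <-]; apply: le_ereal_inf_tmp => _ [k _ <-].
  apply: (@le_trans _ _ (einfs v (maxn n k))).
    by apply: nondecreasing_einfs; rewrite leq_maxl.
  apply: le_trans (einfs_le_esups _ _) _.
  by apply: nonincreasing_esups; rewrite leq_maxr.
(* A real strictly between [liminf v] and [limsup v] would make [v k < t] flip forever. *)
have L_le_l : L <= l.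
  rewrite leNgt; apply/negP => /ereal_between[t /andP[lt tL]].
  case: (ec t) => -[N _ hN].
    have LN : L <= esups v N by apply: ereal_inf_lbound; exists N.
    have : esups v N <= t%:E by apply: ge_ereal_sup => _ [k /= Nk <-]; exact/ltW/hN.
    by move/(le_trans LN); rewrite leNgt tL.
  have Nl : einfs v N <= l by apply: ereal_sup_ubound; exists N.
  have : t%:E <= einfs v N.
    by apply: le_ereal_inf_tmp => _ [k /= Nk <-]; rewrite leNgt; apply/negP/hN.
  by move/le_trans/(_ Nl); rewrite leNgt lt.
exists l; apply: (squeeze_cvge (f := einfs v) (h := esups v)).
- apply: nearW => n; apply/andP; split.
    by apply: ereal_inf_lbound; exists n => /=.
  by apply: ereal_sup_ubound; exists n => /=.
- exact: cvg_einfs_sup.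
- have -> : l = L by apply/eqP; rewrite eq_le l_le_L L_le_l.
  exact: cvg_esups_inf.
Qed.

Lemma cvge_near_lt (w : nat -> \bar R) a b :
  w @ \oo --> a -> a < b -> \forall k \near \oo, w k < b.
Proof.
move=> wa ab; apply: (wa [set y | y < b]); apply: open_nbhs_nbhs; split => //.
exact: open_ereal_lt_ereal.
Qed.

Lemma ext_convexN n (f : 'rV[R]_n -> \bar R) :
  ext_convex (fun x => - f x) <-> ext_concave f.
Proof.
have combN t s l : ((1 - l) * - t + l * - s = - ((1 - l) * t + l * s) :> R)%R.
  by rewrite !mulrN opprD.
split=> cvx x y t s l l01 hx hy.
  have := cvx x y (- t)%R (- s)%R l l01.
  by rewrite combN !EFinN !leeN2 => /(_ hx hy).
have hx' : (- t)%:E <= f x by rewrite EFinN leeNl.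
have hy' : (- s)%:E <= f y by rewrite EFinN leeNl.
by have := cvx x y _ _ l l01 hx' hy'; rewrite combN EFinN leeNl.
Qed.

Lemma ext_convex_cvg n (v : nat -> 'rV[R]_n -> \bar R) g :
  (forall k, ext_convex (v k)) -> (forall x, (fun k => v k x) @ \oo --> g x) ->
  ext_convex g.
Proof.
move=> cvx vg x y t s l l01 gx gy; apply/lee_addgt0Pr => e e0.
have te : t%:E < (t + e)%:E by rewrite lte_fin ltrDl.
have se : s%:E < (s + e)%:E by rewrite lte_fin ltrDl.
have ex := cvge_near_lt (vg x) (le_lt_trans gx te).
have ey := cvge_near_lt (vg y) (le_lt_trans gy se).
apply: (cvge_le _ (vg _)); apply: filterS2 ex ey => k vx vy.
have := cvx k x y _ _ l l01 (ltW vx) (ltW vy).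
by have -> : ((1 - l) * (t + e) + l * (s + e) = (1 - l) * t + l * s + e)%R by ring.
Qed.

Lemma generalized_affine_cvg n (v : nat -> 'rV[R]_n -> \bar R) g :
  (forall k, generalized_affine (v k)) -> (forall x, (fun k => v k x) @ \oo --> g x) ->
  generalized_affine g.
Proof.
move=> ga vg; split; first exact: ext_convex_cvg (fun k => (ga k).1) vg.
apply/ext_convexN; apply: (@ext_convex_cvg _ (fun k x => - v k x)) => [k|x].
  exact/ext_convexN/(ga k).2.
exact: cvgeN.
Qed.

End GeneralizedAffine.

Theorem corollary1 (R : realType) (n : nat) (u : nat -> 'rV[R]_n -> \bar R) :
  (forall k, generalized_affine (u k)) ->
  exists (phi : nat -> nat) (g : 'rV[R]_n -> \bar R),
    (forall k, (phi k < phi k.+1)%N) /\ generalized_affine g /\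
    (forall x, (fun k => u (phi k) x) @ \oo --> g x).
Proof.
move=> ga.
have [phi [hphi ec]] := hemispace_selection (fun k => hemispace_strict_epigraph (ga k)).
have /choice[g ug] x : exists l : \bar R, (fun k => u (phi k) x) @ \oo --> l.
  apply: eventually_constant_lt_cvg => t.
  by have := ec (pt t x); under eq_fun do rewrite strict_epigraph_pt.
exists phi, g; split; first exact: (increasing_seqP _).2 hphi.
by split; [exact: generalized_affine_cvg (fun k => ga (phi k)) ug | exact: ug].
Qed.
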